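(* Let $\mathrm{Tr}:\mathsf{SU}(3)\to\mathbb{C}$ be the trace map and $\Delta=\mathrm{Tr}(\mathsf{SU}(3))\subseteq\mathbb{C}$. Then $\mathrm{Tr}$ is a local submersion at almost all points of $\Delta$: for Lebesgue-almost every $z\in\Delta$, the differential of $\mathrm{Tr}$ (viewed as a map to $\mathbb{C}\cong\mathbb{R}^2$) is surjective at every point of $\mathrm{Tr}^{-1}(z)$. *)

From HB Require Import structures.
From mathcomp Require Import all_boot all_order all_algebra.
From mathcomp Require Import complex.
From mathcomp Require Import all_classical all_reals all_analysis.
Unset Printing Implicit Defensive.
Import Order.TTheory GRing.Theory Num.Theory.
Local Open Scope ring_scope.
Local Open Scope classical_set_scope.

Definition adj3 (R : rcfType) (M : 'M[R[i]]_3) : 'M[R[i]]_3 :=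
  (map_mx (fun z : R[i] => z^*) M)^T.

Definition SU3 (R : rcfType) : set 'M[R[i]]_3 :=
  [set U | U *m adj3 R U = 1%:M /\ \det U = 1].

Definition su3 (R : rcfType) : set 'M[R[i]]_3 :=
  [set X | adj3 R X = - X /\ \tr X = 0].

Definition tangentSU3 (R : rcfType) (U : 'M[R[i]]_3) : set 'M[R[i]]_3 :=
  [set U *m X | X in su3 R].

(* Since Tr is the restriction of a (real-)linear map on M_3(C), its
   differential at U is V |-> \tr V on T_U SU(3). It is surjective onto
   C = R^2 iff its image is all of C. *)
Definition dTr_surjective (R : rcfType) (U : 'M[R[i]]_3) : Prop :=
  forall w : R[i], exists2 V, tangentSU3 R U V & \tr V = w.

Definition Delta (R : rcfType) : set R[i] := [set \tr U | U in SU3 R].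

Definition c_of_pair (R : rcfType) (p : R * R) : R[i] := (p.1 +i* p.2)%C.

(* If the differential V |-> tr V of the trace on T_U SU(3) = U su(3) is not
   onto C = R^2, its image lies on a real line, so some w != 0 makes
   Re (w^* tr(U X)) vanish for every X in su(3).  As the complex span of
   su(3) is sl(3), this forces w^* U - w U^* to be a scalar matrix, hence U
   satisfies a quadratic equation and has a repeated eigenvalue.  The
   characteristic polynomial of U is X^3 - t X^2 + t^* X - 1 with t = tr U,
   so its discriminant, a real quartic in (Re t, Im t), vanishes at t.  That
   quartic is monic in Im t, so each vertical section of its zero set is
   finite, and the zero set is negligible for the product Lebesgue measure. *)

From HB Require Import structures.
From mathcomp Require Import all_boot all_order all_algebra.
From mathcomp Require Import complex.
From mathcomp Require Import all_classical all_reals all_analysis.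
From mathcomp Require Import polyrcf measurable_realfun ring.
Set Implicit Arguments.
Unset Strict Implicit.
Unset Printing Implicit Defensive.
Import Order.TTheory GRing.Theory Num.Theory.
Local Open Scope ring_scope.
Local Open Scope classical_set_scope.

Lemma product_measure1_xsection0 d1 d2 (T1 : measurableType d1)
    (T2 : measurableType d2) (R : realType) (m1 : {measure set T1 -> \bar R})
    (m2 : set T2 -> \bar R) (A : set (T1 * T2)) :
  (forall x, m2 (xsection A x) = 0%E) -> (m1 \x m2)%E A = 0%E.
Proof. by move=> A0; apply: integral0_eq => x _ /=; rewrite A0. Qed.

Lemma lebesgue_measure_poly_roots (R : realType) (p : {poly R}) :
  p != 0 -> lebesgue_measure [set x : R | root p x] = 0%E.
Proof.
move=> p0; apply/countable_lebesgue_measure0/finite_set_countable.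
apply: sub_finite_set (finite_seq (rootsR p)) => x /= px.
by rewrite -(roots_on_rootsR p0 x) in_itv.
Qed.

Lemma negligible_poly_section_zeros (R : realType) (f : R * R -> R)
    (p : R -> {poly R}) :
  measurable_fun [set: R * R] f -> (forall x, p x != 0) ->
  (forall x y, f (x, y) = (p x).[y]) ->
  ((@lebesgue_measure R) \x (@lebesgue_measure R))%E.-negligible
    [set z | f z = 0].
Proof.
move=> mf p0 fE; exists [set z | f z = 0]; split => //.
  by rewrite -[X in measurable X]setTI; exact: mf (measurable_set1 0).
apply: product_measure1_xsection0 => x.
rewrite -(lebesgue_measure_poly_roots (p0 x)); congr lebesgue_measure.
by apply/seteqP; split => y; rewrite /xsection /= inE /= fE => /rootP.
Qed.

Lemma mxtrace_mul_delta (F : pzSemiRingType) n (A : 'M[F]_n) j k :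
  \tr (A *m delta_mx j k) = A k j.
Proof.
rewrite /mxtrace (bigD1 k) //= big1 => [|i ik]; rewrite mxE.
  rewrite (bigD1 j) //= big1 => [|l lj]; rewrite mxE.
    by rewrite !eqxx mulr1 !addr0.
  by rewrite (negbTE lj) mulr0.
by rewrite big1 // => l _; rewrite mxE (negbTE ik) andbF mulr0.
Qed.

Lemma mxtrace_delta (F : pzSemiRingType) n (j k : 'I_n) :
  \tr (delta_mx j k : 'M[F]_n) = (j == k)%:R.
Proof. by rewrite -[delta_mx j k]mul1mx mxtrace_mul_delta mxE eq_sym. Qed.

Section Matrix3.
Variable F : comNzRingType.
Implicit Types A : 'M[F]_3.

(* Rewriting with this makes all entries syntactically uniform for [ring]. *)
Let mx3_inordE A : A = \matrix_(i, j) A (inord i) (inord j).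
Proof. by apply/matrixP => i j; rewrite mxE !inord_val. Qed.

Lemma mxtrace3 A : \tr A = A 0 0 + A 1 1 + A 2 2.
Proof.
by rewrite (mx3_inordE A) /mxtrace !big_ord_recr big_ord0 /= !mxE /= add0r.
Qed.

Lemma det_mx33 A :
  \det A = A 0 0 * (A 1 1 * A 2 2 - A 1 2 * A 2 1)
         - A 0 1 * (A 1 0 * A 2 2 - A 1 2 * A 2 0)
         + A 0 2 * (A 1 0 * A 2 1 - A 1 1 * A 2 0).
Proof.
rewrite (mx3_inordE A) (expand_det_row _ 0) !big_ord_recr big_ord0 /=.
rewrite /cofactor !(expand_det_row _ 0) !big_ord_recr !big_ord0 /= /cofactor.
by rewrite !det_mx11 !mxE /= !expr0 !expr1; ring.
Qed.

Definition minor2_sum A :=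
  A 0 0 * A 1 1 - A 0 1 * A 1 0 + A 0 0 * A 2 2 - A 0 2 * A 2 0
  + A 1 1 * A 2 2 - A 1 2 * A 2 1.

Lemma Cayley_Hamilton3 A :
  A *m A *m A - \tr A *: (A *m A) + minor2_sum A *: A - \det A *: 1%:M = 0.
Proof.
rewrite det_mx33 mxtrace3 /minor2_sum (mx3_inordE A); apply/matrixP => i j.
rewrite !mxE !big_ord_recr !big_ord0 /= !mxE !big_ord_recr !big_ord0 /= !mxE /=.
by case: i => [[|[|[|//]]] ?]; case: j => [[|[|[|//]]] ?] /=; ring.
Qed.

Lemma minor2_sum_trace A : 2 * minor2_sum A = \tr A ^+ 2 - \tr (A *m A).
Proof.
rewrite !mxtrace3 /minor2_sum (mx3_inordE A).
by rewrite !mxE !big_ord_recr !big_ord0 /= !mxE /=; ring.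
Qed.

End Matrix3.

Section Discriminant.
Variable F : fieldType.

(* The discriminant of X^3 - t X^2 + s X - 1, the characteristic polynomial
   of a 3x3 matrix of determinant 1 with trace t and minor2_sum s. *)
Definition disc3 (t s : F) :=
  (t * s) ^+ 2 + 18 * (t * s) - 27 - 4 * (t ^+ 3 + s ^+ 3).

Lemma disc3_triple_root (mu : F) :
  mu ^+ 3 = 1 -> disc3 (mu *+ 3) (3 * mu ^+ 2) = 0.
Proof.
move=> mu3; have -> : disc3 (mu *+ 3) (3 * mu ^+ 2) =
    81 * (mu ^+ 3) ^+ 2 + 162 * mu ^+ 3 - 27 - 108 * mu ^+ 3
    - 108 * (mu ^+ 3) ^+ 2.
  by rewrite /disc3; ring.
by rewrite mu3; ring.
Qed.

(* The last two hypotheses say that X^2 - a X - b divides the cubic, the first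
   that the squares of its three roots sum to a t + 3 b: so every root is a
   root of X^2 - a X - b, and two of them coincide. *)
Lemma disc3_double_root (t s a b : F) :
  t ^+ 2 - 2 * s = a * t + 3 * b -> a ^+ 2 + b - t * a + s = 0 ->
  (a - t) * b = 1 -> disc3 t s = 0.
Proof.
move=> sq_sum cubicX cubic1.
have b0 : b != 0.
  apply/eqP => b0; move: cubic1; rewrite b0 mulr0 => /eqP.
  by rewrite eq_sym oner_eq0.
have aE : a = t + b^-1 by rewrite -[b^-1]mul1r -cubic1 mulfK // addrC subrK.
have sq_sum0 : t ^+ 2 - 2 * s - (a * t + 3 * b) = 0 by rewrite sq_sum subrr.
have tE : t = b ^+ 2 - 2 / b.
  apply/eqP; rewrite -subr_eq0; apply/eqP; transitivity
    (b * (t ^+ 2 - 2 * s - (a * t + 3 * b) + 2 * (a ^+ 2 + b - t * a + s))).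
    by rewrite aE; field.
  by rewrite sq_sum0 cubicX mulr0 addr0 mulr0.
have sE : s = b ^- 2 - 2 * b.
  apply/eqP; rewrite -subr_eq0; apply/eqP; transitivity
    (- (t ^+ 2 - 2 * s - (a * t + 3 * b) + (a ^+ 2 + b - t * a + s))).
    by rewrite aE; field.
  by rewrite sq_sum0 cubicX addr0 oppr0.
by rewrite /disc3 sE tE; field.
Qed.

(* Cayley-Hamilton reduced modulo the quadratic relation reads K A + L = 0:
   either A is scalar, or K = L = 0. *)
Lemma disc3_mx_quadratic (A : 'M[F]_3) (a b : F) :
  \det A = 1 -> A *m A = a *: A + b%:M -> disc3 (\tr A) (minor2_sum A) = 0.
Proof.
move=> detA sqA; set t := \tr A; set s := minor2_sum A.
pose K := a ^+ 2 + b - t * a + s; pose L := a * b - t * b - 1.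
have linA : K *: A + L%:M = 0.
  rewrite -(Cayley_Hamilton3 A) detA sqA mulmxDl mul_scalar_mx -scalemxAl sqA.
  rewrite -[b%:M]scalemx1 -[L%:M]scalemx1.
  by apply/matrixP => i j; rewrite !mxE /K /L /t /s; ring.
have [K0|K0] := eqVneq K 0.
  have L0 : L = 0.
    by have /matrixP/(_ 0 0) := linA; rewrite K0 scale0r add0r !mxE /= mulr1n.
  apply: (disc3_double_root (a := a) (b := b)) => //; last first.
    by apply/eqP; rewrite -subr_eq0 mulrBl; apply/eqP.
  rewrite /s minor2_sum_trace -/t sqA mxtraceD mxtraceZ mxtrace_scalar; ring.
pose mu := - L / K.
have Amu : A = mu%:M.
  apply/matrixP => i j; apply: (mulfI K0).
  have /matrixP/(_ i j) := linA; rewrite !mxE => /eqP.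
  by rewrite addr_eq0 => /eqP->; rewrite mulrnAr /mu mulrC divfK // mulNrn.
have mu3 : mu ^+ 3 = 1 by rewrite -detA Amu det_scalar.
have tE : t = mu *+ 3 by rewrite /t Amu mxtrace_scalar.
have sE : s = 3 * mu ^+ 2 by rewrite /s Amu /minor2_sum !mxE /=; ring.
by rewrite tE sE disc3_triple_root.
Qed.

End Discriminant.

Section RealPlane.
Variable R : rcfType.
Local Notation C := R[i].

(* Twice the euclidean inner product of w and z in C = R^2. *)
Definition dotC (w z : C) := w^* * z + w * z^*.

Lemma conjCE (z : C) : z^* = (z^*)%C.
Proof. by case: z. Qed.

Lemma real_span2 (z0 z1 z : C) :
  dotC ('i * z0) z1 != 0 -> exists a b : R, z = a%:C%C * z0 + b%:C%C * z1.
Proof.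
rewrite -complexiE; case: z0 z1 z => [a0 b0] [a1 b1] [x y].
rewrite /dotC !conjCE; simpc; rewrite eq_complex /= negb_and => indep.
have {indep} d0 : a0 * b1 - a1 * b0 != 0.
  move: indep; apply: contraTneq => d0.
  have -> : - (b0 * a1) + a0 * b1 = 0 by rewrite -d0; ring.
  have -> : - (b0 * b1) - a0 * a1 + (b0 * b1 + a0 * a1) = 0 by ring.
  by rewrite addr0 eqxx.
exists ((x * b1 - y * a1) / (a0 * b1 - a1 * b0)).
exists ((a0 * y - b0 * x) / (a0 * b1 - a1 * b0)).
by simpc; apply/eqP; rewrite eq_complex /=; apply/andP; split; apply/eqP; field.
Qed.

Lemma real_subspace_line (S : set C) :
  (forall (a b : R) u v, S u -> S v -> S (a%:C%C * u + b%:C%C * v)) ->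
  ~ (forall z, S z) -> exists2 w, w != 0 & forall z, S z -> dotC w z = 0.
Proof.
move=> Slin; apply: contra_notP => noline.
have notperp w : w != 0 -> exists2 z, S z & dotC w z != 0.
  move=> w0; apply: contra_notP noline => perp; exists w => // z Sz.
  by apply: contra_notP perp => /eqP; exists z.
have [z0 Sz0 z0n] := notperp 1 (oner_neq0 _).
have z00 : z0 != 0.
  by apply: contraNneq z0n => ->; rewrite /dotC !(mulr0, rmorph0, addr0).
have [z1 Sz1 z1n] := notperp _ (mulf_neq0 (@neq0Ci C) z00).
by move=> z; have [a [b ->]] := real_span2 z z1n; exact: Slin.
Qed.

End RealPlane.

Section SU3.
Variable R : rcfType.
Local Notation C := R[i].
Implicit Types (A B M U X : 'M[C]_3) (w : C).

Lemma adj3D A B : adj3 R (A + B) = adj3 R A + adj3 R B.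
Proof. by apply/matrixP => i j; rewrite !mxE rmorphD. Qed.

Lemma adj3N A : adj3 R (- A) = - adj3 R A.
Proof. by apply/matrixP => i j; rewrite !mxE rmorphN. Qed.

Lemma adj3Z w A : adj3 R (w *: A) = w^* *: adj3 R A.
Proof. by apply/matrixP => i j; rewrite !mxE rmorphM. Qed.

Lemma adj3_delta (j k : 'I_3) : adj3 R (delta_mx j k) = delta_mx k j.
Proof. by apply/matrixP => a b; rewrite !mxE rmorph_nat andbC. Qed.

Lemma adj3M A B : adj3 R (A *m B) = adj3 R B *m adj3 R A.
Proof. by rewrite /adj3 map_mxM trmx_mul. Qed.

Lemma mxtrace_adj3 A : \tr (adj3 R A) = (\tr A)^*.
Proof. by rewrite /adj3 mxtrace_tr trace_map_mx. Qed.

Lemma su3_real_comb (a b : R) X Y :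
  su3 R X -> su3 R Y -> su3 R (a%:C%C *: X + b%:C%C *: Y).
Proof.
move=> [skX trX] [skY trY]; split.
  by rewrite adj3D !adj3Z skX skY !conjCE !conjc_real !scalerN opprD.
by rewrite mxtraceD !mxtraceZ trX trY !mulr0 addr0.
Qed.

Lemma dotC_mxtrace_su3 w U X : su3 R X ->
  dotC w (\tr (U *m X)) = \tr ((w^* *: U - w *: adj3 R U) *m X).
Proof.
move=> [skX _]; rewrite /dotC -mxtrace_adj3 adj3M skX mulNmx raddfN /=.
rewrite [\tr (X *m _)]mxtrace_mulC mulmxBl -!scalemxAl raddfB /= !mxtraceZ.
by rewrite mulrN.
Qed.

(* The complex span of su(3) contains every delta_mx j k with j != k and
   every delta_mx j j - delta_mx k k. *)
Lemma su3_annihilator_scalar M :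
  (forall X, su3 R X -> \tr (M *m X) = 0) -> M = (M 0 0)%:M.
Proof.
move=> Mperp; have offdiag j k : j != k -> M k j = 0.
  move=> jk; have kj : (k == j) = false by rewrite eq_sym (negbTE jk).
  have X1 : su3 R (delta_mx j k - delta_mx k j).
    split; first by rewrite adj3D adj3N !adj3_delta opprD opprK addrC.
    by rewrite raddfB /= !mxtrace_delta kj (negbTE jk) subrr.
  have X2 : su3 R ('i *: (delta_mx j k + delta_mx k j)).
    split; first by rewrite adj3Z adj3D !adj3_delta conjCi scaleNr addrC.
    by rewrite mxtraceZ mxtraceD !mxtrace_delta kj (negbTE jk) addr0 mulr0.
  have := Mperp _ X1; have := Mperp _ X2; rewrite -scalemxAr mxtraceZ.
  rewrite mulmxDr mulmxBr mxtraceD raddfB /= !mxtrace_mul_delta.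
  move=> /eqP; rewrite mulf_eq0 (negbTE (@neq0Ci C)) /= => /eqP sum0 /eqP.
  rewrite subr_eq0 => /eqP eqkj; move: sum0; rewrite -eqkj -mulr2n => /eqP.
  by rewrite mulrn_eq0 /= => /eqP.
have diag j k : M j j = M k k.
  have X3 : su3 R ('i *: (delta_mx j j - delta_mx k k)).
    split; first by rewrite adj3Z adj3D adj3N !adj3_delta conjCi scaleNr.
    by rewrite mxtraceZ raddfB /= !mxtrace_delta !eqxx subrr mulr0.
  have /eqP := Mperp _ X3.
  rewrite -scalemxAr mxtraceZ mulmxBr raddfB /= !mxtrace_mul_delta.
  by rewrite mulf_eq0 (negbTE (@neq0Ci C)) subr_eq0 => /eqP.
apply/matrixP => j k; rewrite mxE.
have [<-|jk] := eqVneq j k; first by rewrite mulr1n (diag j 0).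
by rewrite mulr0n offdiag // eq_sym.
Qed.

Lemma not_dTr_surjective_perp U : ~ dTr_surjective R U ->
  exists2 w, w != 0 & forall X, su3 R X -> dotC w (\tr (U *m X)) = 0.
Proof.
move=> nsurj; pose S := [set \tr (U *m X) | X in su3 R].
have Slin (a b : R) u v : S u -> S v -> S (a%:C%C * u + b%:C%C * v).
  move=> [X sX <-] [Y sY <-]; exists (a%:C%C *: X + b%:C%C *: Y).
    exact: su3_real_comb.
  by rewrite mulmxDr -!scalemxAr mxtraceD !mxtraceZ.
have [|w w0 perp] := real_subspace_line Slin.
  move=> Sall; apply: nsurj => z; have [X sX <-] := Sall z.
  by exists (U *m X) => //; exists X.
by exists w => // X sX; apply: perp; exists X.
Qed.

Lemma SU3_critical_quadratic U : SU3 R U -> ~ dTr_surjective R U ->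
  exists a b, U *m U = a *: U + b%:M.
Proof.
move=> [unitU _] /not_dTr_surjective_perp [w w0 perp].
set M := w^* *: U - w *: adj3 R U.
have Mscalar : M = (M 0 0)%:M.
  by apply: su3_annihilator_scalar => X sX; rewrite -dotC_mxtrace_su3 ?perp.
have wc0 : w^* != 0 by rewrite conjC_eq0.
have MU : w^* *: (U *m U) = M 0 0 *: U + w%:M.
  have := congr1 (mulmx^~ U) Mscalar.
  rewrite /= mulmxBl -!scalemxAl (mulmx1C unitU) mul_scalar_mx => <-.
  by rewrite scalemx1 subrK.
exists (M 0 0 / w^*), (w / w^*); apply: (scalerI wc0).
by rewrite MU scalerDr !scalerA scale_scalar_mx ![w^* * (_ / _)]mulrC !divfK.
Qed.

(* Multiply Cayley-Hamilton by U^* = U^-1 and take traces. *)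
Lemma minor2_sum_SU3 U : SU3 R U -> minor2_sum U = (\tr U)^*.
Proof.
move=> [unitU detU]; set t := \tr U; set s := minor2_sum U.
have CH := Cayley_Hamilton3 U; rewrite detU scale1r -/t -/s in CH.
have : (U *m U *m U - t *: (U *m U) + s *: U - 1%:M) *m adj3 R U =
       U *m U - t *: U + s%:M - adj3 R U.
  rewrite !(mulmxDl, mulNmx) -!scalemxAl -!mulmxA unitU !mulmx1 mul1mx.
  by rewrite scalemx1.
rewrite CH mul0mx => /(congr1 mxtrace).
rewrite mxtrace0 !mxtraceD !raddfN /= mxtraceZ mxtrace_scalar mxtrace_adj3 -/t.
move=> CHtr; apply/eqP; rewrite -subr_eq0.
have -> : s - t^* =
    (\tr (U *m U) - t * t + s *+ 3 - t^*) - (2 * s - (t ^+ 2 - \tr (U *m U))).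
  by ring.
by rewrite -CHtr minor2_sum_trace !subrr.
Qed.

Lemma SU3_critical_disc3 U :
  SU3 R U -> ~ dTr_surjective R U -> disc3 (\tr U) (\tr U)^* = 0.
Proof.
move=> SU crit; have [a [b sqU]] := SU3_critical_quadratic SU crit.
by rewrite -minor2_sum_SU3 //; apply: disc3_mx_quadratic sqU; case: SU.
Qed.

End SU3.

(* The zero set of [deltoid] is the deltoid curve bounding Delta. *)
Definition deltoid (R : rcfType) (x y : R) :=
  (x ^+ 2 + y ^+ 2) ^+ 2 + 18 * (x ^+ 2 + y ^+ 2) - 27
  - 8 * x ^+ 3 + 24 * x * y ^+ 2.

Lemma disc3_conj_pair (R : rcfType) (x y : R) :
  disc3 (x +i* y)%C (x +i* y)%C^* = (deltoid x y)%:C%C.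
Proof.
rewrite conjCE /disc3 /deltoid !exprS !expr0 !mulr1; simpc.
by apply/eqP; rewrite eq_complex /=; apply/andP; split; apply/eqP; ring.
Qed.

Definition deltoid_poly (R : rcfType) (x : R) : {poly R} :=
  'X^4 + (2 * x ^+ 2 + 24 * x + 18)%:P * 'X^2
  + (x ^+ 4 - 8 * x ^+ 3 + 18 * x ^+ 2 - 27)%:P.

Lemma deltoid_horner (R : rcfType) (x y : R) :
  deltoid x y = (deltoid_poly x).[y].
Proof.
rewrite /deltoid_poly !(hornerD, hornerM, hornerC, hornerXn, hornerX).
by rewrite /deltoid; ring.
Qed.

Lemma deltoid_poly_neq0 (R : rcfType) (x : R) : deltoid_poly x != 0.
Proof.
apply/eqP => /(congr1 (fun p : {poly R} => p`_4)).
by rewrite !coefE /= mulr0 !addr0; apply/eqP; rewrite oner_eq0.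
Qed.

Lemma measurable_deltoid (R : realType) :
  measurable_fun [set: R * R] (fun z : R * R => deltoid z.1 z.2).
Proof.
have m1 : measurable_fun [set: R * R] fst by exact: measurable_fst.
have m2 : measurable_fun [set: R * R] snd by exact: measurable_snd.
rewrite /deltoid; repeat (apply: measurable_funD || apply: measurable_funB
  || apply: measurable_funM || apply: measurable_funX || apply: measurable_funN
  || exact: measurable_cst || exact: m1 || exact: m2).
Qed.

Theorem proposition6p1 (R : realType) :
  ((@lebesgue_measure R) \x (@lebesgue_measure R))%E.-negligible
    [set p : R * R | Delta R (c_of_pair R p) /\
       exists2 U, SU3 R U /\ \tr U = c_of_pair R p & ~ dTr_surjective R U].
Proof.
have := negligible_poly_section_zeros (@measurable_deltoid R)
  (@deltoid_poly_neq0 R) (@deltoid_horner R).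
apply: negligibleS => -[x y] [_ [U [SU trU] crit]] /=.
have := SU3_critical_disc3 SU crit; rewrite trU /c_of_pair disc3_conj_pair.
by move/(congr1 (@complex.Re R)).
Qed.
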